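(* For every prime $p$ and every integer $\tau$ there exists $\alpha^\tau_p\in\mathbb Z[z^2]$, $z=q-q^{-1}$, such that $$\sum_{j=0}^{p-1}(q^{p\tau})^{p-1-2j}-p\,(-1)^{(p-1)\tau}=[p]^2\,\alpha^\tau_p,\qquad [p]=\frac{q^p-q^{-p}}{q-q^{-1}}.$$ *)

From HB Require Import structures.
From mathcomp Require Import all_boot all_order all_algebra.
From mathcomp Require Import fraction.
Set Implicit Arguments. Unset Strict Implicit. Unset Printing Implicit Defensive.
Import Order.TTheory GRing.Theory Num.Theory.
Local Open Scope ring_scope.

(* Laurent polynomials Z[q,q^-1] are realized inside the field of rational
   functions Q(q) = {fraction {poly int}}, with q the image of 'X. *)
Definition LQ := {fraction {poly int}}.
Definition qv : LQ := tofrac ('X : {poly int}).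
Definition zv : LQ := qv - qv^-1.
Definition qint (n : nat) : LQ := (qv ^+ n - qv ^- n) / (qv - qv^-1).
Definition inZz2 (P : {poly int}) : LQ := (map_poly (fun c : int => c%:~R) P).[zv ^+ 2].

From mathcomp Require Import all_boot all_order all_algebra.
From mathcomp Require Import fraction ring zify.
Set Implicit Arguments. Unset Strict Implicit. Unset Printing Implicit Defensive.
Import Order.TTheory GRing.Theory Num.Theory.
Local Open Scope ring_scope.

(* Write x = q^(p tau).  For p = 2 the left-hand side is
   x + x^-1 - 2 (-1)^tau with x = (q^2)^tau, while for odd p = 2r+1 it is
   sum_(k = 1..r) (Y^(tau k) + Y^(-tau k) - 2) with Y = q^(2p).  Both are
   instances of one divisibility fact about "symmetric Laurent powers": if
   w + w^-1 lies in a subring A and s^2 = 1 with s in A, then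
       w^e + w^-e - 2 s^e = (w + w^-1 - 2 s) * h   with h in A,
   proved for natural e by the Chebyshev-type two-step recurrence and then
   extended to integer e.  Here A = Z[z^2]: q^2 + q^-2 = z^2 + 2 lies in it,
   hence so does Y + Y^-1.  Finally the divisors are identified with [p]^2:
   q^2 + q^-2 + 2 = [2]^2 and Y + Y^-1 - 2 = [p]^2 z^2.
   The file first develops the divisibility fact over an arbitrary field and
   subring, then the regrouping of the balanced sum, then the facts specific
   to Z[z^2] inside Q(q), and derives the theorem from the two parity cases. *)

Section SymmetricPowers.

Variable F : fieldType.
Variable A : F -> Prop.
Hypothesis A1 : A 1.
Hypothesis AB : forall u v, A u -> A v -> A (u - v).
Hypothesis AM : forall u v, A u -> A v -> A (u * v).

Lemma closed0 : A 0.
Proof. by rewrite -(subrr 1); apply: AB. Qed.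

Lemma closedN u : A u -> A (- u).
Proof. by move=> Au; rewrite -sub0r; apply: AB => //; apply: closed0. Qed.

Lemma closedD u v : A u -> A v -> A (u + v).
Proof. by move=> Au Av; rewrite -[v]opprK; apply: AB => //; apply: closedN. Qed.

Lemma closed_nat (n : nat) : A n%:R.
Proof. by elim: n => [|n IH]; [apply: closed0 | rewrite -addn1 natrD; apply: closedD]. Qed.

Lemma closedX u n : A u -> A (u ^+ n).
Proof. by move=> Au; elim: n => [|n IH]; [rewrite expr0 | rewrite exprS; apply: AM]. Qed.

Definition symdev (w s : F) (n : nat) : F := w ^+ n + (w ^+ n)^-1 - 2 * s ^+ n.

(* Chebyshev-type recurrence for symdev; it is what makes symdev w s 1 divide
   every symdev w s n. *)
Lemma symdev_rec (w s : F) n : w != 0 -> s * s = 1 ->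
  symdev w s n.+2 = (symdev w s 1 + 2 * s) * symdev w s n.+1 - symdev w s n
                    + 2 * s ^+ n.+1 * symdev w s 1.
Proof.
move=> w0 s2; have wn0 : w ^+ n != 0 by apply: expf_neq0.
apply/eqP; rewrite -subr_eq0; apply/eqP.
transitivity (2 * s ^+ n * (s * s - 1)); last by rewrite s2 subrr mulr0.
rewrite /symdev !exprS ?expr1; move: wn0; set W := w ^+ n => wn0.
by field; rewrite w0 wn0.
Qed.

Lemma symdev_div (w s : F) : w != 0 -> s * s = 1 -> A s -> A (w + w^-1) ->
  forall n, exists2 h, A h & symdev w s n = symdev w s 1 * h.
Proof.
move=> w0 s2 As Aw.
have Ac : A (symdev w s 1).
  by rewrite /symdev !expr1; apply: AB => //; apply: AM => //; apply: closed_nat.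
suff two_steps n : (exists2 h, A h & symdev w s n = symdev w s 1 * h) /\
                   (exists2 h, A h & symdev w s n.+1 = symdev w s 1 * h).
  by move=> n; case: (two_steps n).
elim: n => [|n [[h0 A0h E0] [h1 A1h E1]]].
  split; last by exists 1; rewrite ?mulr1.
  exists 0; first exact: closed0.
  by rewrite /symdev !expr0 invr1 mulr1 mulr0 subrr.
split; first by exists h1.
exists ((symdev w s 1 + 2 * s) * h1 - h0 + 2 * s ^+ n.+1).
  apply: closedD; first apply: AB => //; first apply: AM => //.
    by apply: closedD => //; apply: AM => //; apply: closed_nat.
  by apply: AM; [apply: closed_nat | apply: closedX].
rewrite symdev_rec // E1 E0; ring.
Qed.

Lemma symdev_divz (w s : F) : w != 0 -> s * s = 1 -> A s -> A (w + w^-1) ->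
  forall e : int, exists2 h, A h &
    w ^ e + (w ^ e)^-1 - 2 * s ^ e = (w + w^-1 - 2 * s) * h.
Proof.
move=> w0 s2 As Aw e.
have [h Ah E] := symdev_div w0 s2 As Aw `|e|%N.
exists h => //; move: E; rewrite /symdev !expr1.
have s0 : s != 0 by apply: contra_eq_neq s2 => ->; rewrite mul0r eq_sym oner_neq0.
have sV k : (s ^+ k)^-1 = s ^+ k by rewrite -exprVn -[s^-1]mul1r -s2 mulfK.
case: e => [n | n] /= E; first exact: E.
have negz x : x ^ Negz n = x ^- n.+1 by [].
by rewrite invrK -E !negz sV [w ^- _ + _]addrC.
Qed.

Lemma sympow_closed (w : F) n : w != 0 -> A (w + w^-1) -> A (w ^+ n + (w ^+ n)^-1).
Proof.
move=> w0 Aw; have [h Ah E] := symdev_div w0 (mulr1 1) A1 Aw n.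
rewrite -(subrK (2 * 1 ^+ n) (w ^+ n + _)) -/(symdev w 1 n) E.
apply: closedD; last by rewrite expr1n mulr1; apply: closed_nat.
apply: AM => //; rewrite /symdev !expr1 mulr1.
by apply: AB => //; apply: closed_nat.
Qed.

Lemma sum_multiple (d : F) (f : nat -> F) r :
  (forall k, exists2 h, A h & f k = d * h) ->
  exists2 H, A H & \sum_(k < r) f k = d * H.
Proof.
move=> Hf; elim: r => [|r [H AH E]]; first by exists 0; rewrite ?big_ord0 ?mulr0 //; apply: closed0.
have [h Ah Eh] := Hf r.
by exists (H + h); [apply: closedD | rewrite big_ord_recr /= E Eh mulrDr].
Qed.

End SymmetricPowers.

Lemma balanced_sum_peel (R : unitRingType) (x : R) m :
  \sum_(j < m.+2) x ^ (m.+2%:Z - 1 - 2 * j%:Z)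
  = x ^+ m.+1 + (x ^+ m.+1)^-1 + \sum_(j < m) x ^ (m%:Z - 1 - 2 * j%:Z).
Proof.
rewrite big_ord_recl big_ord_recr /= [_ + x ^ _]addrC addrA exprnN -[x ^+ m.+1]/(x ^ Posz m.+1).
congr (x ^ _ + x ^ _ + _); rewrite ?/bump /=; try lia.
by apply: eq_bigr => i _; congr (_ ^ _); rewrite /bump /=; lia.
Qed.

Lemma balanced_sum_odd (R : unitRingType) (x : R) r :
  \sum_(j < (2 * r).+1) x ^ ((2 * r).+1%:Z - 1 - 2 * j%:Z) - (2 * r).+1%:R
  = \sum_(k < r) ((x ^+ 2) ^+ k.+1 + ((x ^+ 2) ^+ k.+1)^-1 - 2).
Proof.
elim: r => [|r IH]; first by rewrite big_ord1 big_ord0 /= expr0z subrr.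
have -> : (2 * r.+1).+1 = (2 * r).+3 by lia.
rewrite balanced_sum_peel [in RHS]big_ord_recr /= -IH -!exprM.
rewrite (_ : (2 * r.+1 = (2 * r).+2)%N); last by lia.
rewrite -[(2 * r).+3]addn2 natrD opprD.
set a := _ + _ ^- _; set S := \sum_(j < _) _; set n := _%:R.
by rewrite [a + S]addrC -!addrA; congr (S + _); rewrite [RHS]addrCA (addrCA (- n)).
Qed.

Lemma sym_sq_z (F : fieldType) (q : F) : q != 0 ->
  q ^+ 2 + (q ^+ 2)^-1 = (q - q^-1) ^+ 2 + 2.
Proof. by move=> q0; field. Qed.

(* The side condition q^2 != 1 needed to clear denominators of [n]. *)
Lemma qq_neq1 (F : fieldType) (q : F) : q != 0 -> q - q^-1 != 0 -> q * q - 1 != 0.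
Proof. by move=> q0 z0; rewrite -(mulfV q0) -mulrBr mulf_neq0. Qed.

Lemma sym_sq_qint2 (F : fieldType) (q : F) : q != 0 -> q - q^-1 != 0 ->
  q ^+ 2 + (q ^+ 2)^-1 - 2 * (-1) = ((q ^+ 2 - (q ^+ 2)^-1) / (q - q^-1)) ^+ 2.
Proof. by move=> q0 z0; field; rewrite q0 qq_neq1. Qed.

Lemma sym_dev_qint (F : fieldType) (q y : F) : q != 0 -> q - q^-1 != 0 -> y != 0 ->
  y ^+ 2 + (y ^+ 2)^-1 - 2 = ((y - y^-1) / (q - q^-1)) ^+ 2 * (q - q^-1) ^+ 2.
Proof. by move=> q0 z0 y0; field; rewrite q0 y0 qq_neq1. Qed.

Lemma qv_neq0 : qv != 0.
Proof. by rewrite /qv tofrac_eq0 polyX_eq0. Qed.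

(* z = 0 would force q^2 = 1, impossible for the indeterminate q. *)
Lemma zv_neq0 : zv != 0.
Proof.
apply/eqP => z0.
have qq : qv * qv = 1.
  have {2}-> : qv = qv^-1 by apply/eqP; rewrite -subr_eq0 -/zv z0.
  by rewrite divff // qv_neq0.
move: qq; rewrite /qv -tofracM -tofrac1 => /eqP; rewrite tofrac_eq => /eqP qq.
by have := congr1 (fun r : {poly int} => size r) qq; rewrite -expr2 size_polyXn size_poly1.
Qed.

Definition Z2 (v : LQ) : Prop := exists P : {poly int}, v = inZz2 P.

Lemma Z2_1 : Z2 1.
Proof. by exists 1; rewrite /inZz2 rmorph1 hornerC. Qed.

Lemma Z2B u v : Z2 u -> Z2 v -> Z2 (u - v).
Proof. by move=> [P ->] [Q ->]; exists (P - Q); rewrite /inZz2 rmorphB /= hornerD hornerN. Qed.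

Lemma Z2M u v : Z2 u -> Z2 v -> Z2 (u * v).
Proof. by move=> [P ->] [Q ->]; exists (P * Q); rewrite /inZz2 rmorphM /= hornerM. Qed.

Lemma Z2_zsq : Z2 (zv ^+ 2).
Proof. by exists 'X; rewrite /inZz2 map_polyX hornerX. Qed.

Lemma Z2_q2 : Z2 (qv ^+ 2 + (qv ^+ 2)^-1).
Proof.
rewrite sym_sq_z ?qv_neq0 // -/zv.
by apply: (closedD Z2_1 Z2B) => //; [apply: Z2_zsq | apply: (closed_nat Z2_1 Z2B)].
Qed.

(* The theorem for p = 2: with w = q^2 and s = -1 the left-hand side is
   w^tau + w^-tau - 2 (-1)^tau, a multiple of w + w^-1 + 2 = [2]^2. *)
Lemma balanced_two (tau : int) :
  exists P : {poly int},
    \sum_(j < 2) (qv ^ (2%:Z * tau)) ^ (2%:Z - 1 - 2 * j%:Z)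
      - 2%:R * (-1 : LQ) ^ ((2%:Z - 1) * tau)
    = qint 2 ^+ 2 * inZz2 P.
Proof.
have w0 : qv ^+ 2 != 0 by rewrite expf_neq0 ?qv_neq0.
have s2 : (-1 : LQ) * (-1) = 1 by rewrite mulrNN mulr1.
have Z2_N1 : Z2 (-1) by apply: (closedN Z2_1 Z2B Z2_1).
have [h [P ->] E] := symdev_divz Z2_1 Z2B Z2M w0 s2 Z2_N1 Z2_q2 tau.
exists P; rewrite (balanced_sum_peel _ 0) big_ord0 addr0 expr1 mul1r -exprz_exp.
by rewrite -[qv ^ 2%:Z]/(qv ^+ 2) E /qint sym_sq_qint2 ?qv_neq0 ?zv_neq0.
Qed.

(* The theorem for an odd number n = 2r+1 of terms: with y = q^n the sign is 1
   and the left-hand side is sum_(k = 1..r) (y^(2 tau k) + y^(-2 tau k) - 2),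
   a multiple of y^2 + y^-2 - 2 = [n]^2 z^2 with cofactor in Z[z^2]. *)
Lemma balanced_odd (r : nat) (tau : int) :
  exists P : {poly int},
    \sum_(j < (2 * r).+1) (qv ^ ((2 * r).+1%:Z * tau)) ^ ((2 * r).+1%:Z - 1 - 2 * j%:Z)
      - (2 * r).+1%:R * (-1 : LQ) ^ (((2 * r).+1%:Z - 1) * tau)
    = qint (2 * r).+1 ^+ 2 * inZz2 P.
Proof.
set n := (2 * r).+1; set y := qv ^+ n.
have y0 : y != 0 by rewrite expf_neq0 ?qv_neq0.
have Y0 : y ^+ 2 != 0 by rewrite expf_neq0.
have sign : (-1 : LQ) ^ ((n%:Z - 1) * tau) = 1.
  have -> : (n%:Z - 1) * tau = 2%:Z * (r%:Z * tau) by rewrite /n; lia.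
  by rewrite -exprz_exp -[(-1 : LQ) ^ 2%:Z]/((-1) ^+ 2) sqrrN expr1n exp1rz.
have Z2_Y : Z2 (y ^+ 2 + (y ^+ 2)^-1).
  rewrite /y -exprM mulnC exprM.
  by apply: (sympow_closed Z2_1 Z2B Z2M); rewrite ?expf_neq0 ?qv_neq0 //; apply: Z2_q2.
set d := y ^+ 2 + (y ^+ 2)^-1 - 2.
have term_div k : exists2 h, Z2 h &
    ((y ^ tau) ^+ 2) ^+ k.+1 + (((y ^ tau) ^+ 2) ^+ k.+1)^-1 - 2 = d * h.
  have [h Z2_h Eh] := symdev_divz Z2_1 Z2B Z2M Y0 (mulr1 1) Z2_1 Z2_Y (tau * k.+1%:Z).
  have pow : ((y ^ tau) ^+ 2) ^+ k.+1 = (y ^+ 2) ^ (tau * k.+1%:Z).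
    by rewrite !exprnP !exprz_exp; congr (_ ^ _); lia.
  by exists h; rewrite // pow; rewrite exp1rz !mulr1 in Eh.
have [H Z2_H E] := sum_multiple Z2_1 Z2B r term_div.
have [P E'] : Z2 (zv ^+ 2 * H) by apply: Z2M => //; apply: Z2_zsq.
exists P; rewrite sign mulr1 -exprz_exp -[qv ^ n%:Z]/y balanced_sum_odd.
by rewrite -E' E /d (sym_dev_qint qv_neq0 zv_neq0 y0) -/zv mulrA.
Qed.

Theorem lemma7p5 (p : nat) (tau : int) (hp : prime p) :
  exists P : {poly int},
    \sum_(j < p) (qv ^ (p%:Z * tau)) ^ (p%:Z - 1 - 2 * j%:Z)
      - p%:R * (-1 : LQ) ^ ((p%:Z - 1) * tau)
    = qint p ^+ 2 * inZz2 P.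
Proof.
have [-> | p_odd] := even_prime hp; first exact: balanced_two.
have -> : p = (2 * p./2).+1 by rewrite -{1}(odd_double_half p) p_odd add1n -mul2n.
exact: balanced_odd.
Qed.
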